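(* Let $X',X''$ be a disjoint cover of an index set $X$, $\Pi:=\Pi X$, $\Pi':=\Pi X'$, $\Pi'':=\Pi X''$, and let $\preceq\subseteq(\Pi\times\Pi)\cup(\Pi'\times\Pi')\cup(\Pi''\times\Pi'')$ be a smooth (generalized) Hamming relation with associated $\mu$. Then ($\mu$*3) holds: for every $\Sigma\subseteq\Pi$, with $\Sigma'':=\Sigma\upharpoonright X''$, $\mu(\Pi'\times\Sigma'')\upharpoonright X''\subseteq\mu(\Sigma)\upharpoonright X''$. Consequently, for the size notion ''$B\subseteq A$ is big iff $\mu(A)\subseteq B\subseteq A$'', condition (S*3) holds: for $A\subseteq\Sigma\subseteq\Pi$, if $A$ is big in $\Sigma$ then there is $B$ big in $\Pi'\times\Sigma''$ with $B\upharpoonright X''\subseteq A\upharpoonright X''$.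
   Context: $\Pi X$ is the product of the value sets over the indices in $X$. Elements $\sigma\in\Pi$ are written $\sigma=\sigma'\circ\sigma''$ (concatenation) with $\sigma'=\sigma\upharpoonright X'$, $\sigma''=\sigma\upharpoonright X''$; $\Sigma\upharpoonright Y$ is the set of restrictions. $\preceq$ is a (generalized) Hamming relation iff $\preceq$ is reflexive and for all $\sigma,\tau\in\Pi$: $\sigma\preceq\tau\iff(\sigma'\preceq\tau'$ and $\sigma''\preceq\tau'')$. $x\prec y$ means $x\preceq y$ and $x\neq y$. For a set $A$ (subset of $\Pi$, $\Pi'$ or $\Pi''$), $\mu(A):=\{x\in A:\neg\exists x'\in A.\,x'\prec x\}$. $\preceq$ is smooth iff for every such $A$ and every $x\in A-\mu(A)$ there is $x'\in\mu(A)$ with $x'\prec x$. *)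

(* Subsets of the index set X (= the whole index type I). *)
Definition sub_idx {I : Type} (S : I -> Prop) := { i : I | S i }.

Definition PiOn {I : Type} (V : I -> Type) (S : I -> Prop) :=
  forall i : sub_idx S, V (proj1_sig i).

Definition Pi {I : Type} (V : I -> Type) := forall i : I, V i.

Definition restr {I : Type} {V : I -> Type} (S : I -> Prop) (s : Pi V) : PiOn V S :=
  fun i => s (proj1_sig i).

(* Image of a set under a map, used for Sigma |` Y. *)
Definition img {A B : Type} (f : A -> B) (S : A -> Prop) : B -> Prop :=
  fun y => exists x, S x /\ f x = y.

Definition subset {T : Type} (A B : T -> Prop) := forall x, A x -> B x.

Definition strict {T : Type} (le : T -> T -> Prop) (x y : T) := le x y /\ x <> y.

Definition mu {T : Type} (le : T -> T -> Prop) (A : T -> Prop) : T -> Prop :=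
  fun x => A x /\ ~ (exists x', A x' /\ strict le x' x).

Definition smooth {T : Type} (le : T -> T -> Prop) :=
  forall (A : T -> Prop) x, A x -> ~ mu le A x ->
    exists x', mu le A x' /\ strict le x' x.

Definition reflexive {T : Type} (le : T -> T -> Prop) := forall x, le x x.

(* Generalized Hamming relation, given as its three components on
   Pi, Pi' and Pi'' (the relation lives on the disjoint union of these). *)
Definition hamming {I : Type} {V : I -> Type} (X1 X2 : I -> Prop)
  (le : Pi V -> Pi V -> Prop) (le1 : PiOn V X1 -> PiOn V X1 -> Prop)
  (le2 : PiOn V X2 -> PiOn V X2 -> Prop) :=
  reflexive le /\ reflexive le1 /\ reflexive le2 /\
  forall s t : Pi V, le s t <-> (le1 (restr X1 s) (restr X1 t) /\ le2 (restr X2 s) (restr X2 t)).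

(* Pi' x Sigma'' = { sigma in Pi | sigma |` X'' in Sigma |` X'' } *)
Definition prodPi1 {I : Type} {V : I -> Type} (X2 : I -> Prop) (Sg : Pi V -> Prop) : Pi V -> Prop :=
  fun s => img (restr X2) Sg (restr X2 s).

Definition big {T : Type} (le : T -> T -> Prop) (A B : T -> Prop) :=
  subset (mu le A) B /\ subset B A.

From Stdlib Require Import Classical ClassicalEpsilon FunctionalExtensionality.

(* If x is minimal in Pi' x Sigma'', then x'' is minimal in Sigma'' for the
   component order: a strictly smaller t'' could be glued to x' and would lie
   strictly below x.  A minimal element of Sigma below some s in Sigma with
   s'' = x'' (it exists by smoothness) then has the same X''-part as x. *)

Section Glue.

Context {I : Type} {V : I -> Type} {X1 : I -> Prop} (X2 : I -> Prop).

Definition glue (s t : Pi V) : Pi V :=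
  fun i => match excluded_middle_informative (X2 i) with
           | left _ => s i
           | right _ => t i
           end.

Lemma restr_glue2 (s t : Pi V) : restr X2 (glue s t) = restr X2 s.
Proof.
  apply functional_extensionality_dep; intros [j Hj]; unfold restr, glue; simpl.
  destruct (excluded_middle_informative (X2 j)); [reflexivity | contradiction].
Qed.

Lemma restr_glue1 (Hdisj : forall i, ~ (X1 i /\ X2 i)) (s t : Pi V) :
  restr X1 (glue s t) = restr X1 t.
Proof.
  apply functional_extensionality_dep; intros [j Hj]; unfold restr, glue; simpl.
  destruct (excluded_middle_informative (X2 j)) as [Hj2 | _]; [|reflexivity].
  exfalso; exact (Hdisj j (conj Hj Hj2)).
Qed.

End Glue.

Lemma smooth_mu_below {T : Type} (le : T -> T -> Prop) (A : T -> Prop) (x : T) :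
  reflexive le -> smooth le -> A x -> exists z, mu le A z /\ le z x.
Proof.
  intros Hrefl Hsm Hx.
  destruct (classic (mu le A x)) as [Hmx | Hmx].
  - exists x; auto.
  - destruct (Hsm A x Hx Hmx) as [z [Hz [Hzx _]]]; eauto.
Qed.

Lemma mu_big {T : Type} (le : T -> T -> Prop) (A : T -> Prop) : big le A (mu le A).
Proof. split; intros x Hx; [exact Hx | apply Hx]. Qed.

Section Hamming.

Context {I : Type} {V : I -> Type} {X1 X2 : I -> Prop}.
Hypothesis Hdisj : forall i, ~ (X1 i /\ X2 i).
Context {le : Pi V -> Pi V -> Prop} {le1 : PiOn V X1 -> PiOn V X1 -> Prop}
  {le2 : PiOn V X2 -> PiOn V X2 -> Prop}.
Hypothesis Hham : hamming X1 X2 le le1 le2.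

Lemma hamming_le_restr2 (s t : Pi V) :
  le s t -> le2 (restr X2 s) (restr X2 t).
Proof. intro Hst; apply (proj2 (proj2 (proj2 Hham)) s t) in Hst; apply Hst. Qed.

Lemma mu_prodPi1_restr2_min (Sg : Pi V -> Prop) (x t : Pi V) :
  mu le (prodPi1 X2 Sg) x -> Sg t -> le2 (restr X2 t) (restr X2 x) ->
  restr X2 t = restr X2 x.
Proof.
  destruct Hham as [_ [Hrefl1 [_ Hiff]]].
  intros [_ Hmin] Ht Htx; apply NNPP; intro Hne; apply Hmin.
  exists (glue X2 t x); split.
  - exists t; split; [exact Ht | symmetry; apply restr_glue2].
  - split.
    + apply Hiff; rewrite restr_glue2, (restr_glue1 X2 Hdisj); auto.
    + intro E; apply Hne; rewrite <- E; symmetry; apply restr_glue2.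
Qed.

Lemma mu_prodPi1_restr2 (Sg : Pi V -> Prop) :
  smooth le ->
  subset (img (restr X2) (mu le (prodPi1 X2 Sg))) (img (restr X2) (mu le Sg)).
Proof.
  intros Hsm y [x [Hmx <-]].
  destruct (proj1 Hmx) as [s [Hs Hsx]].
  destruct (smooth_mu_below le Sg s (proj1 Hham) Hsm Hs) as [z [Hz Hzs]].
  exists z; split; [exact Hz |].
  apply (mu_prodPi1_restr2_min Sg x z Hmx (proj1 Hz)).
  rewrite <- Hsx; exact (hamming_le_restr2 z s Hzs).
Qed.

End Hamming.

Theorem fact4p10 (I : Type) (V : I -> Type) (X1 X2 : I -> Prop)
  (Hcover : forall i, X1 i \/ X2 i) (Hdisj : forall i, ~ (X1 i /\ X2 i))
  (le : Pi V -> Pi V -> Prop) (le1 : PiOn V X1 -> PiOn V X1 -> Prop)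
  (le2 : PiOn V X2 -> PiOn V X2 -> Prop)
  (Hham : hamming X1 X2 le le1 le2)
  (Hsm : smooth le) (Hsm1 : smooth le1) (Hsm2 : smooth le2) :
  (forall Sg : Pi V -> Prop,
     subset (img (restr X2) (mu le (prodPi1 X2 Sg))) (img (restr X2) (mu le Sg)))
  /\
  (forall A Sg : Pi V -> Prop, subset A Sg -> big le Sg A ->
     exists B, big le (prodPi1 X2 Sg) B /\ subset (img (restr X2) B) (img (restr X2) A)).
Proof.
  assert (Hmu3 := fun Sg => mu_prodPi1_restr2 Hdisj Hham Sg Hsm).
  split; [exact Hmu3 |].
  intros A Sg _ [HmuA _].
  exists (mu le (prodPi1 X2 Sg)); split; [apply mu_big |].
  intros y Hy; destruct (Hmu3 Sg y Hy) as [z [Hz <-]].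
  exists z; split; [apply HmuA; exact Hz | reflexivity].
Qed.
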